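(* Consider the binary symmetric channel with a single error. Let $n\ge2$ and $1\le k\le n-1$, and suppose there is a single-error-correcting transmission strategy of length $n-1$ with $k-1$ feedbacks transmitting $M(n-1)$ messages. Let $$U(n)=2\left\lfloor\frac{2^n}{2(n+1)}\right\rfloor,\qquad r(n)=2^n-(n+1)U(n).$$ Then there is a single-error-correcting transmission strategy of length $n$ with $k$ feedbacks transmitting $M(n)$ messages, where $$M(n)=\begin{cases}2M(n-1) & \text{if } 2M(n-1)\le \frac{2^n}{n+1},\\ U(n) & \text{if } 2M(n-1)>\frac{2^n}{n+1}\text{ and } r(n)<2n,\\ U(n)+1 & \text{if } 2M(n-1)>\frac{2^n}{n+1}\text{ and } r(n)\ge 2n.\end{cases}$$
   Context: Binary symmetric channel: alphabet $\{0,1\}$, an error replaces a symbol by the other symbol; ''a single error'' means at most one error during the whole transmission. A strategy of length $n$ with $k$ feedbacks: $n=n_1+\cdots+n_{k+1}$; for a message $m\in[M]$, the first $n_1$ symbols depend only on $m$; after $N_{i-1}=n_1+\cdots+n_{i-1}$ symbols have been sent ($i\ge2$), the encoder knows (error-free, instantaneously) the $N_{i-1}$ received symbols, and the $i$th block of $n_i$ symbols is a function of $m$ and these received symbols. $k=0$ means no feedback. The strategy transmits $M$ messages with a single error if the sets of output sequences reachable from distinct messages with at most one error are pairwise disjoint. *)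

From mathcomp Require Import all_boot.
Set Implicit Arguments. Unset Strict Implicit. Unset Printing Implicit Defensive.

(* Block lengths ns = [:: n_1; ...; n_(k+1)].  fbpt ns t = N_(i-1), the number
   of symbols whose reception is known to the encoder when it sends the
   symbol of (0-based) index t, i.e. n_1 + ... + n_(i-1) where t lies in the
   i-th block. *)
Fixpoint fbpt (ns : seq nat) (t : nat) : nat :=
  match ns with
  | [::] => 0
  | a :: ns' => if a <= t then a + fbpt ns' (t - a) else 0
  end.

Definition valid_blocks (n k : nat) (ns : seq nat) : bool :=
  [&& size ns == k.+1, sumn ns == n & all (fun a => 0 < a) ns].

(* An encoder: the symbol of index t sent for message m, as a function of m,
   t and the prefix of received symbols known through feedback. *)
Definition encoder (M : nat) := 'I_M -> seq bool -> nat -> bool.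

Definition sent (M : nat) (ns : seq nat) (enc : encoder M) (m : 'I_M)
    (y : seq bool) : seq bool :=
  [seq enc m (take (fbpt ns t) y) t | t <- iota 0 (size y)].

Definition hamming (x y : seq bool) : nat :=
  count (fun p : bool * bool => p.1 != p.2) (zip x y).

Definition reachable (M : nat) (ns : seq nat) (enc : encoder M) (m : 'I_M)
    (y : seq bool) : Prop :=
  hamming (sent ns enc m y) y <= 1.

Definition corrects (n M : nat) (ns : seq nat) (enc : encoder M) : Prop :=
  forall (m1 m2 : 'I_M) (y : n.-tuple bool),
    reachable ns enc m1 y -> reachable ns enc m2 y -> m1 = m2.

Definition strategy_exists (n k M : nat) : Prop :=
  exists (ns : seq nat) (enc : encoder M), valid_blocks n k ns /\ corrects n ns enc.

Definition U (n : nat) : nat := 2 * (2 ^ n %/ (2 * n.+1)).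
Definition r (n : nat) : nat := 2 ^ n - n.+1 * U n.

(* M(n) as a function of n and M(n-1) = Mprev.
   "2 Mprev <= 2^n/(n+1)" is written 2 Mprev (n+1) <= 2^n. *)
Definition Mnext (n Mprev : nat) : nat :=
  if 2 * Mprev * n.+1 <= 2 ^ n then 2 * Mprev
  else if r n < 2 * n then U n else (U n).+1.

From mathcomp Require Import all_boot zify.
Set Implicit Arguments. Unset Strict Implicit. Unset Printing Implicit Defensive.

(* Split the messages into two groups of sizes a, b <= M(n-1) and let the first
   symbol announce the group; the feedback after it tells the encoder whether
   that symbol was corrupted.  If not, the old strategy of length n-1 is run
   for the message inside its group.  If it was, no further error can occur,
   so the message is sent as a fixed word of length n-1 that no message of the
   other group can produce.  Since a causal strategy determines the received
   word from its error pattern, each message reaches at most n words of length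
   n-1, so such spare words exist as soon as a n + b <= 2^(n-1) and
   b n + a <= 2^(n-1).  The three cases of M(n) take a = b = M(n-1),
   a = b = U(n)/2, and a = U(n)/2 + 1, b = U(n)/2 respectively. *)

Lemma fbpt_le ns t : fbpt ns t <= t.
Proof.
elim: ns t => [|a ns IH] t //=.
by case: ifP => // le_at; rewrite -{2}(subnKC le_at) leq_add2l IH.
Qed.

Section ErrorPattern.

Variables (ns : seq nat) (e : seq bool -> nat -> bool).

Definition error_pattern (y : seq bool) : seq bool :=
  [seq e (take (fbpt ns t) y) t != nth false y t | t <- iota 0 (size y)].

Lemma size_error_pattern y : size (error_pattern y) = size y.
Proof. by rewrite size_map size_iota. Qed.

Lemma error_pattern_inj y1 y2 :
  size y1 = size y2 -> error_pattern y1 = error_pattern y2 -> y1 = y2.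
Proof.
move=> eq_size eq_err.
suff eq_take t : t <= size y1 -> take t y1 = take t y2.
  by rewrite -(take_size y1) eq_take // eq_size take_size.
elim: t => [|t IH] lt_t; first by rewrite !take0.
rewrite (take_nth false) // (take_nth false) -?eq_size // IH ?(ltnW lt_t) //.
congr rcons; have := congr1 (nth false ^~ t) eq_err.
rewrite /error_pattern !(nth_map 0) ?size_iota -?eq_size // nth_iota -?eq_size //.
have le_fbpt := fbpt_le ns t.
rewrite -(take_takel y1 le_fbpt) -(take_takel y2 le_fbpt) IH ?(ltnW lt_t) //.
by case: (e _ _); case: (nth false y1 t); case: (nth false y2 t).
Qed.

End ErrorPattern.

Lemma hamming_sent M ns (enc : encoder M) m y :
  hamming (sent ns enc m y) y = count id (error_pattern ns (enc m) y).
Proof.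
rewrite /hamming -[X in zip _ X](mkseq_nth false y) zip_map.
by rewrite /error_pattern !count_map.
Qed.

Lemma hamming_cons x xs y ys : hamming (x :: xs) (y :: ys) = (x != y) + hamming xs ys.
Proof. by []. Qed.

Lemma hamming_eq0 x y : size x = size y -> hamming x y = 0 -> x = y.
Proof.
elim: x y => [|a x IH] [|b y] //= [eq_size].
by rewrite /hamming /=; case: (a =P b) => [-> /(IH _ eq_size)->|].
Qed.

Lemma eq_count_le1 (s1 s2 : bitseq) : size s1 = size s2 ->
  count id s1 <= 1 -> count id s2 <= 1 -> index true s1 = index true s2 -> s1 = s2.
Proof.
have count0_nseq (s : bitseq) : count id s = 0 -> s = nseq (size s) false.
  by elim: s => [|[] s IHs] //= /IHs {1}->.
elim: s1 s2 => [|b1 s1 IH] [|b2 s2] //= [eq_size].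
case: b1 b2 => [] [] //=; last by move=> c1 c2 [] /(IH _ eq_size c1 c2)->.
rewrite !add1n !ltnS !leqn0 => /eqP c1 /eqP c2 _.
by rewrite (count0_nseq _ c1) (count0_nseq _ c2) eq_size.
Qed.

Section ReachableWords.

Variables (L : nat) (ns : seq nat) (M : nat) (enc : encoder M).

Lemma card_reachable_from m :
  #|[set y : L.-tuple bool | hamming (sent ns enc m y) y <= 1]| <= L.+1.
Proof.
pose pos (y : L.-tuple bool) : 'I_L.+1 := inord (index true (error_pattern ns (enc m) y)).
rewrite -[L.+1]card_ord; apply: (@leq_card_in _ _ pos) => y1 y2.
have index_lt (y : L.-tuple bool) : index true (error_pattern ns (enc m) y) < L.+1.
  by rewrite ltnS -{2}(size_tuple y) -(size_error_pattern ns (enc m)) index_size.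
rewrite !inE !hamming_sent => r1 r2 /(congr1 val); rewrite /= !inordK // => eq_pos.
apply/val_inj/(error_pattern_inj (ns := ns) (e := enc m)); first by rewrite !size_tuple.
by apply: eq_count_le1; rewrite ?size_error_pattern ?size_tuple.
Qed.

Definition reachable_words : {set L.-tuple bool} :=
  \bigcup_(m : 'I_M) [set y : L.-tuple bool | hamming (sent ns enc m y) y <= 1].

Lemma card_reachable_words : #|reachable_words| <= M * L.+1.
Proof.
rewrite -[M in M * _]card_ord -sum_nat_const /reachable_words.
elim/big_rec2: _ => [|m U n _ le_U]; first by rewrite cards0.
by rewrite (leq_trans (leq_card_setU _ U).1) // leq_add ?card_reachable_from.
Qed.

Definition spare_word (i : nat) : L.-tuple bool :=
  nth (nseq_tuple L false) (enum (~: reachable_words)) i.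

Lemma card_spare_words : 2 ^ L - M * L.+1 <= #|~: reachable_words|.
Proof.
rewrite leq_subLR -card_bool -card_tuple -(cardsC reachable_words) leq_add2r.
exact: card_reachable_words.
Qed.

Lemma spare_word_unreachable i m :
  i < #|~: reachable_words| -> ~ reachable ns enc m (spare_word i).
Proof.
rewrite cardE => lt_i; have := mem_nth (nseq_tuple L false) lt_i.
rewrite mem_enum inE => /bigcupP unreach reach; apply: unreach.
by exists m; rewrite ?inE.
Qed.

Lemma spare_word_inj i j : i < #|~: reachable_words| -> j < #|~: reachable_words| ->
  spare_word i = spare_word j -> i = j.
Proof.
rewrite cardE => lt_i lt_j eq_ij; apply/eqP.
by rewrite -(nth_uniq (nseq_tuple L false) lt_i lt_j (enum_uniq _)); apply/eqP.
Qed.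

End ReachableWords.

Lemma sent_cons1 M ns (enc : encoder M) m y0 y :
  sent (1 :: ns) enc m (y0 :: y) =
  enc m [::] 0 :: sent ns (fun m p t => enc m (y0 :: p) t.+1) m y.
Proof.
rewrite /sent /= -add1n iotaDl -map_comp; congr cons.
by apply: eq_map => t; rewrite add1n /= subSS subn0.
Qed.

Section Branching.

Variables (L : nat) (ns : seq nat) (a b : nat) (encA : encoder a) (encB : encoder b).

(* [head false p] is the first symbol as received: it differs from the group bit
   exactly when that symbol was corrupted. *)
Definition branch_encoder : encoder (a + b) := fun m p t =>
  match t, split m with
  | 0, inl _ => false
  | 0, inr _ => true
  | t.+1, inl i =>
      if head false p then nth false (spare_word L ns encB i) t else encA i (behead p) t
  | t.+1, inr j =>
      if head false p then encB j (behead p) t else nth false (spare_word L ns encA j) t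
  end.

Lemma reachable_branch m y0 (y : L.-tuple bool) :
  reachable (1 :: ns) branch_encoder m (y0 :: y) ->
  match split m with
  | inl i => if y0 then spare_word L ns encB i = y else reachable ns encA i y
  | inr j => if y0 then reachable ns encB j y else spare_word L ns encA j = y
  end.
Proof.
have sent_spare (w : L.-tuple bool) :
    [seq nth false w t | t <- iota 0 (size y)] = w.
  by rewrite size_tuple -{2}(size_tuple w) -/(mkseq _ _) mkseq_nth.
rewrite /reachable sent_cons1 /sent /=.
case: (split m) => [i|j]; case: y0 => //=;
  rewrite sent_spare hamming_cons add1n ltnS leqn0 => /eqP;
  by move/(hamming_eq0 (etrans (size_tuple _) (esym (size_tuple y))))/val_inj.
Qed.

Hypotheses (correctsA : corrects L ns encA) (correctsB : corrects L ns encB).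
Hypotheses (spareA : a <= #|~: reachable_words L ns encB|)
           (spareB : b <= #|~: reachable_words L ns encA|).

Lemma branch_corrects : corrects L.+1 (1 :: ns) branch_encoder.
Proof.
have ltA (i : 'I_a) := leq_trans (ltn_ord i) spareA.
have ltB (j : 'I_b) := leq_trans (ltn_ord j) spareB.
move=> m1 m2; case/tupleP=> y0 y /reachable_branch r1 /reachable_branch r2.
apply: (can_inj splitK); move: r1 r2.
case: (split m1) => [i1|j1]; case: (split m2) => [i2|j2]; case: y0 => /=.
- by move=> <- /(spare_word_inj (ltA i2) (ltA i1)) /val_inj ->.
- by move=> /correctsA r1 /r1 ->.
- by move=> <- /spare_word_unreachable-/(_ (ltA i1)).
- by move=> /[swap] <- /spare_word_unreachable-/(_ (ltB j2)).
- by move=> /[swap] <- /spare_word_unreachable-/(_ (ltA i2)).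
- by move=> <- /spare_word_unreachable-/(_ (ltB j1)).
- by move=> /correctsB r1 /r1 ->.
- by move=> <- /(spare_word_inj (ltB j2) (ltB j1)) /val_inj ->.
Qed.

End Branching.

Definition restrict_encoder M c (le_cM : c <= M) (enc : encoder M) : encoder c :=
  fun m => enc (widen_ord le_cM m).

Lemma corrects_restrict n ns M c (le_cM : c <= M) (enc : encoder M) :
  corrects n ns enc -> corrects n ns (restrict_encoder le_cM enc).
Proof. by move=> C m1 m2 y r1 r2; apply/val_inj/(congr1 val (C _ _ y r1 r2)). Qed.

Lemma valid_blocks_cons1 n k ns : valid_blocks n k ns -> valid_blocks n.+1 k.+1 (1 :: ns).
Proof. by rewrite /valid_blocks /= !eqSS. Qed.

Lemma strategy_exists_branch n k M a b :
  strategy_exists n k M -> a <= M -> b <= M ->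
  a * n.+1 + b <= 2 ^ n -> b * n.+1 + a <= 2 ^ n ->
  strategy_exists n.+1 k.+1 (a + b).
Proof.
move=> [ns [enc [valid_ns corrects_enc]]] le_aM le_bM ineqA ineqB.
pose encA := restrict_encoder le_aM enc; pose encB := restrict_encoder le_bM enc.
have spare_bound c d (e : encoder d) :
    d * n.+1 + c <= 2 ^ n -> c <= #|~: reachable_words n ns e|.
  move=> ineq; apply: leq_trans (card_spare_words n ns e).
  by rewrite leq_subRL // (leq_trans _ ineq) ?leq_addr.
exists (1 :: ns), (branch_encoder n ns encA encB); split.
  exact: valid_blocks_cons1.
apply: branch_corrects; try exact: corrects_restrict.
- exact: spare_bound ineqB.
- exact: spare_bound ineqA.
Qed.

Lemma Mnext_split L Mprev : exists a b, [/\ Mnext L.+1 Mprev = a + b,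
  a <= Mprev, b <= Mprev, a * L.+1 + b <= 2 ^ L & b * L.+1 + a <= 2 ^ L].
Proof.
rewrite /Mnext /r /U expnS; set u := 2 * 2 ^ L %/ (2 * L.+2).
have le_u : u * L.+2 <= 2 ^ L.
  by have := leq_divM (2 * 2 ^ L) (2 * L.+2); rewrite -/u; nia.
case: ifP => [small | /negbT big].
  by exists Mprev, Mprev; split; nia.
have lt_uM : u < Mprev by move: big; rewrite -ltnNge; nia.
case: ifP => [_ | /negbT rem_big].
  by exists u, u; split; nia.
by exists u.+1, u; split; nia.
Qed.

Theorem theorem2 (n k Mprev : nat) :
  2 <= n -> 1 <= k <= n - 1 ->
  strategy_exists (n - 1) (k - 1) Mprev ->
  strategy_exists n k (Mnext n Mprev).
Proof.
case: n k => [|L] [|k] // _ _; rewrite !subn1 /= => prev.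
have [a [b [-> le_aM le_bM ineqA ineqB]]] := Mnext_split L Mprev.
exact: strategy_exists_branch prev le_aM le_bM ineqA ineqB.
Qed.
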